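(* Let \[ M=\begin{pmatrix} \frac15&\frac15&\frac15&\frac15&\frac15\\ \frac35&\frac12&\frac3{10}&0&-\frac25\\ 1&\frac12&-\frac3{14}&-\frac47&\frac27\\ \frac75&0&-\frac45&\frac12&-\frac1{10}\\ \frac95&-\frac65&\frac{18}{35}&-\frac9{70}&\frac1{70} \end{pmatrix}. \] Consider real vectors $\tilde A=(\tilde A_0,\dots,\tilde A_4)$, $\tilde B=(\tilde B_0,\dots,\tilde B_4)$ satisfying: $\tilde A_0=\tilde B_0=1$; $0\le\tilde A_k\le\tilde B_k$ for $0\le k\le4$; $\sum_k\tilde A_k=\tfrac52$; $\sum_k\tilde B_k=10$; $\tilde B=2M\tilde A$; and $\tilde A_1=\tilde B_1$. Then the unique solution is \[ \tilde A=(1,0,0,0,\tfrac32),\qquad \tilde B=(1,0,\tfrac{20}7,\tfrac52,\tfrac{51}{14}). \]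
   Context: This is the normalized intrinsic linear program for two-dimensional codes detecting the adjoint (spin-1) sector inside the spin-2 irrep $V_2\cong\mathrm{Sym}^4(\mathbb C^2)$ of $\mathrm{SU}(2)$: $M$ is the unnormalized MacWilliams matrix $M_{k_1k_2}=(-1)^{4+k_1+k_2}(2k_1+1)\{\begin{smallmatrix}2&2&k_1\\2&2&k_2\end{smallmatrix}\}$ (Wigner $6j$-symbol), and the normalized enumerators of a code with projector $P$ are $\tilde A_k=\frac{N}{K^2}A_k(P,P)$, $\tilde B_k=\frac NK B_k(P,P)$ with $N=5$, $K=2$. *)

From mathcomp Require Import all_boot all_order all_algebra.
Set Implicit Arguments. Unset Strict Implicit. Unset Printing Implicit Defensive.
Import Order.TTheory GRing.Theory Num.Theory.
Local Open Scope ring_scope.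

(* Normalized MacWilliams matrix M (rows k1 = 0..4, columns k2 = 0..4). *)
Definition Mrows (R : realFieldType) : seq (seq R) :=
  [:: [:: 1/5; 1/5; 1/5; 1/5; 1/5];
      [:: 3/5; 1/2; 3/10; 0; -(2/5)];
      [:: 1; 1/2; -(3/14); -(4/7); 2/7];
      [:: 7/5; 0; -(4/5); 1/2; -(1/10)];
      [:: 9/5; -(6/5); 18/35; -(9/70); 1/70]].

Definition Mmx (R : realFieldType) : 'M[R]_5 :=
  \matrix_(i < 5, j < 5) nth 0 (nth [::] (Mrows R) i) j.

Definition vec5 (R : realFieldType) (s : seq R) : 'cV[R]_5 :=
  \col_(i < 5) nth 0 s i.

Definition LPfeasible (R : realFieldType) (A B : 'cV[R]_5) : Prop :=
  A ord0 ord0 = 1 /\ B ord0 ord0 = 1 /\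
  (forall k : 'I_5, 0 <= A k ord0 /\ A k ord0 <= B k ord0) /\
  \sum_(k < 5) A k ord0 = 5/2 /\
  \sum_(k < 5) B k ord0 = 10 /\
  B = 2 *: (Mmx R *m A) /\
  A (inord 1) ord0 = B (inord 1) ord0.

From mathcomp Require Import all_boot all_order all_algebra lra.
Set Implicit Arguments. Unset Strict Implicit. Unset Printing Implicit Defensive.
Import Order.TTheory GRing.Theory Num.Theory.
Local Open Scope ring_scope.

(* Only row 1 of [B = 2 M A] matters: with [A_0 = 1] the constraint [A_1 = B_1]
   reads [4 A_4 = 6 + 3 A_2], and substituting into [sum_k A_k = 5/2] leaves
   [A_1 + 7/4 A_2 + A_3 = 0].  Since these entries are nonnegative they vanish,
   so [A_4 = 3/2], and [B = 2 M A] then determines [B]. *)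

Lemma big_ord5 (V : nmodType) (F : 'I_5 -> V) :
  \sum_(k < 5) F k = F (inord 0) + F (inord 1) + F (inord 2) + F (inord 3) + F (inord 4).
Proof.
rewrite !big_ord_recr big_ord0 /= add0r.
by do !congr (_ + _); congr F; apply: val_inj; rewrite /= inordK.
Qed.

Lemma ord5_ind (P : 'I_5 -> Prop) :
  P (inord 0) -> P (inord 1) -> P (inord 2) -> P (inord 3) -> P (inord 4) ->
  forall i, P i.
Proof.
have inordE k (hk : (k < 5)%N) : Ordinal hk = inord k by apply: val_inj; rewrite /= inordK.
by move=> ? ? ? ? ? [[|[|[|[|[|k]]]]] hk] //; rewrite inordE.
Qed.

Lemma col5P (T : Type) (u v : 'cV[T]_5) :
  (forall k, (k < 5)%N -> u (inord k) ord0 = v (inord k) ord0) -> u = v.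
Proof.
move=> huv; apply/matrixP => i j; rewrite (ord1 j).
by move: i; apply: ord5_ind; apply: huv.
Qed.

Lemma vec5E (R : realFieldType) (s : seq R) (k : nat) :
  (k < 5)%N -> vec5 s (inord k) ord0 = nth 0 s k.
Proof. by move=> hk; rewrite mxE inordK. Qed.

Lemma scale2_Mmx_mulE (R : realFieldType) (A : 'cV[R]_5) (i : nat) : (i < 5)%N ->
  (2 *: (Mmx R *m A)) (inord i) ord0
  = 2 * \sum_(j < 5) nth 0 (nth [::] (Mrows R) i) j * A j ord0.
Proof.
by move=> hi; rewrite !mxE; congr (_ * _); apply: eq_bigr => j _; rewrite mxE inordK.
Qed.

Lemma scale2_Mmx_optimum (R : realFieldType) :
  2 *: (Mmx R *m vec5 [:: 1; 0; 0; 0; 3/2]) = vec5 [:: 1; 0; 20/7; 5/2; 51/14].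
Proof.
apply: col5P => k hk; rewrite scale2_Mmx_mulE // vec5E // big_ord5 !inordK // !vec5E //=.
by case: k hk => [|[|[|[|[|k]]]]] //= _; lra.
Qed.

Lemma LPfeasible_optimumA (R : realFieldType) (A B : 'cV[R]_5) :
  LPfeasible A B -> A = vec5 [:: 1; 0; 0; 0; 3/2].
Proof.
have ord0E : (ord0 : 'I_5) = inord 0 by apply: val_inj; rewrite /= inordK.
move=> [hA0 [_ [hle [hsumA [_ [hB hA1B1]]]]]].
rewrite ord0E in hA0; rewrite big_ord5 in hsumA.
have hB1 : B (inord 1) ord0
    = 2 * (3/5 * 1 + 1/2 * A (inord 1) ord0 + 3/10 * A (inord 2) ord0
           + 0 * A (inord 3) ord0 + - (2/5) * A (inord 4) ord0).
  by rewrite hB scale2_Mmx_mulE // big_ord5 !inordK //= hA0.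
have [hA1 _] := hle (inord 1); have [hA2 _] := hle (inord 2); have [hA3 _] := hle (inord 3).
have hnull : A (inord 1) ord0 + 7/4 * A (inord 2) ord0 + A (inord 3) ord0 = 0 by lra.
apply: col5P => k hk; rewrite vec5E //.
by case: k hk => [|[|[|[|[|k]]]]] //= _; lra.
Qed.

Lemma LPfeasible_optimum (R : realFieldType) :
  LPfeasible (vec5 [:: 1; 0; 0; 0; 3/2]) (vec5 [:: 1; 0; 20/7; 5/2; 51/14] : 'cV[R]_5).
Proof.
rewrite /LPfeasible scale2_Mmx_optimum !big_ord5 !mxE !inordK //=.
do !split => //; try lra.
all: by move: k; apply: ord5_ind; rewrite !vec5E //=; lra.
Qed.

Theorem mainTheorem12 (R : realFieldType) (A B : 'cV[R]_5) :
  LPfeasible A B <->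
  (A = vec5 [:: 1; 0; 0; 0; 3/2] /\ B = vec5 [:: 1; 0; 20/7; 5/2; 51/14]).
Proof.
split; last by move=> [-> ->]; apply: LPfeasible_optimum.
move=> hfeas; have hA := LPfeasible_optimumA hfeas.
split=> //; have [_ [_ [_ [_ [_ [-> _]]]]]] := hfeas.
by rewrite hA scale2_Mmx_optimum.
Qed.
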